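(* For every $(C,v)\in\mathrm{SO}(3)\times\mathbb{R}$ with $C=(c_{jk})$, $$\rho_1(\mathrm{Id},(C,v))=\rho_2(\mathrm{Id},(\tilde C,v)),\quad \tilde C=\begin{pmatrix}c_{11}\cos v+c_{12}\sin v&c_{12}\cos v-c_{11}\sin v&c_{13}\\ c_{21}\cos v+c_{22}\sin v&c_{22}\cos v-c_{21}\sin v&c_{23}\\ c_{31}\cos v+c_{32}\sin v&c_{32}\cos v-c_{31}\sin v&c_{33}\end{pmatrix}.$$
   Context: $\mathrm{SO}(3)\times\mathbb{R}$ is the group of $4\times4$ matrices $(C,v)=\mathrm{diag}(C,e^v)$, $C\in\mathrm{SO}(3)$, $v\in\mathbb{R}$, with identity $\mathrm{Id}$. Let $E_1=e_{32}-e_{23}$, $E_2=e_{13}-e_{31}$, $E_3=e_{21}-e_{12}$, $E_4=e_{44}$ ($4\times4$ matrix units). $\rho_1$ (resp. $\rho_2$) is the left-invariant sub-Riemannian metric given by the left-invariant distribution with value $\mathrm{span}(E_1,E_4-E_3,E_2)$ (resp. $\mathrm{span}(E_1,E_4,E_2)$) at $\mathrm{Id}$ and the inner product making these three vectors orthonormal. *)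

From HB Require Import structures.
From mathcomp Require Import all_boot all_order all_algebra.
From mathcomp Require Import all_classical all_reals all_analysis.
Set Implicit Arguments. Unset Strict Implicit. Unset Printing Implicit Defensive.
Import Order.TTheory GRing.Theory Num.Theory.
Import numFieldNormedType.Exports.
Local Open Scope classical_set_scope.
Local Open Scope ring_scope.

Section Defs.
Variable R : realType.

(* 4x4 matrix units (0-indexed): E1 = e32 - e23, E2 = e13 - e31,
   E3 = e21 - e12, E4 = e44. *)
Definition o0 : 'I_4 := inord 0.
Definition o1 : 'I_4 := inord 1.
Definition o2 : 'I_4 := inord 2.
Definition o3 : 'I_4 := inord 3.

Definition E1 : 'M[R]_4 := delta_mx o2 o1 - delta_mx o1 o2.
Definition E2 : 'M[R]_4 := delta_mx o0 o2 - delta_mx o2 o0.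
Definition E3 : 'M[R]_4 := delta_mx o1 o0 - delta_mx o0 o1.
Definition E4 : 'M[R]_4 := delta_mx o3 o3.

Definition SO3 (C : 'M[R]_3) : Prop := C^T *m C = 1%:M /\ \det C = 1.

(* the element (C,v) = diag(C, e^v) of SO(3) x R *)
Definition grp_elt (C : 'M[R]_3) (v : R) : 'M[R]_4 :=
  \matrix_(i < 4, j < 4)
    if (i < 3)%N && (j < 3)%N then C (inord i) (inord j)
    else if (i == 3%N :> nat) && (j == 3%N :> nat) then expR v else 0.

(* A left-invariant sub-Riemannian structure given by an orthonormal frame
   X : 'I_3 -> 'M_4 of the distribution at Id. *)
Definition ctrl_mx (X : 'I_3 -> 'M[R]_4) (u : 'I_3 -> R -> R) (s : R) : 'M[R]_4 :=
  \sum_(k < 3) u k s *: X k.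

(* g : [0,1] -> group is the horizontal trajectory from Id with L^oo control u:
   g(t) = Id + int_0^t g(s) (sum_k u_k(s) X_k) ds  on [0,1]. *)
Local Notation I01 := (`[(0:R), (1:R)]%classic : set R).
Definition admissible (X : 'I_3 -> 'M[R]_4) (u : 'I_3 -> R -> R)
    (g : R -> 'M[R]_4) (target : 'M[R]_4) : Prop :=
  (forall k, measurable_fun I01 (u k)) /\
  (exists M : R, forall k t, t \in `[(0:R), 1] -> `|u k t| <= M) /\
  (forall i j, {within I01, continuous (fun t => g t i j)}) /\
  g 0 = 1%:M /\ g 1 = target /\
  (forall t, t \in `[(0:R), 1] -> forall i j,
     g t i j = (1%:M : 'M[R]_4) i j +
       Rintegral lebesgue_measure (`[(0:R), t]%classic : set R) (fun s => (g s *m ctrl_mx X u s) i j)).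

Definition ctrl_length (u : 'I_3 -> R -> R) : R :=
  Rintegral lebesgue_measure I01
    (fun s => Num.sqrt (\sum_(k < 3) u k s ^+ 2)).

Definition sr_dist (X : 'I_3 -> 'M[R]_4) (target : 'M[R]_4) : R :=
  inf [set l | exists u g, admissible X u g target /\ l = ctrl_length u].

Definition frame1 : 'I_3 -> 'M[R]_4 := fun k =>
  if (k == 0%N :> nat) then E1 else if (k == 1%N :> nat) then E4 - E3 else E2.
Definition frame2 : 'I_3 -> 'M[R]_4 := fun k =>
  if (k == 0%N :> nat) then E1 else if (k == 1%N :> nat) then E4 else E2.

Definition rho1 (target : 'M[R]_4) := sr_dist frame1 target.
Definition rho2 (target : 'M[R]_4) := sr_dist frame2 target.

Definition Ctilde (C : 'M[R]_3) (v : R) : 'M[R]_3 :=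
  \matrix_(i < 3, j < 3)
    if (j == 0%N :> nat) then C i (inord 0) * cos v + C i (inord 1) * sin v
    else if (j == 1%N :> nat) then C i (inord 1) * cos v - C i (inord 0) * sin v
    else C i (inord 2).

End Defs.

From mathcomp Require Import all_boot all_order all_algebra.
From mathcomp Require Import all_classical all_reals all_analysis.
From mathcomp Require Import ring measurable_realfun.
Set Implicit Arguments. Unset Strict Implicit. Unset Printing Implicit Defensive.
Import Order.TTheory GRing.Theory Num.Theory.
Import numFieldNormedType.Exports.
Local Open Scope classical_set_scope.
Local Open Scope ring_scope.

(* Both frames belong to the family frameA a = (E1, E4 + a E3, E2): rho1 is a = -1
   and rho2 is a = 0.  Let N(th) = exp (th E3), the rotation by th in the
   (x1, x2)-plane; it commutes with E3 and E4 and rotates the pair (E1, E2).  If g is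
   a horizontal curve for frameA a with controls u and phi(t) = int_0^t u_2 (written
   u k1 below, indices start at 0), then h = g N(b phi) is horizontal for
   frameA (a + b), with the controls obtained by rotating (u_1, u_3) by the angle
   b phi.  These have the same pointwise norm, so h has the same length.  The last
   diagonal entry of g solves y' = u_2 y, so phi(1) = v and h ends at (C R(b v), v).
   Taking b = 1 and b = -1 shows that the two sets of lengths coincide, and
   C R(v) is the matrix C tilde.
   Trajectories are only absolutely continuous; the product and chain rules for
   them reduce to the fact that a function whose increments are O((t - s)^2) is
   constant. *)

Section Calculus.
Variable R : realType.

Lemma le0_of_le_div_succ (x K : R) : (forall n, x <= K / n.+1%:R) -> x <= 0.
Proof.
move=> hx; rewrite leNgt; apply/negP => x0.
have := hx (Num.truncn (K / x)); rewrite ler_pdivlMr ?ltr0n // mulrC.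
have := truncnS_gt (K / x); rewrite ltr_pdivrMr //.
by move=> /lt_le_trans h /h; rewrite ltxx.
Qed.

Lemma norm_sub_le_div_succ (D : R -> R) (K t : R) (n : nat) :
  0 <= K -> 0 <= t -> t <= 1 ->
  (forall s r, 0 <= s -> s <= r -> r <= 1 -> `|D r - D s| <= K * (r - s) ^+ 2) ->
  `|D t - D 0| <= K / n.+1%:R.
Proof.
move=> K0 t0 t1 hD; set m : R := n.+1%:R.
have m0 : 0 < m by rewrite ltr0n.
pose x (k : nat) : R := t * k%:R / m.
have -> : D t - D 0 = \sum_(0 <= k < n.+1) (D (x k.+1) - D (x k)).
  by rewrite telescope_sumr // /x mulr0 mul0r mulfK ?gt_eqF.
apply: le_trans (ler_norm_sum _ _ _) _; rewrite big_mkord.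
apply: (@le_trans _ _ (\sum_(k < n.+1) K * (t / m) ^+ 2)).
  apply: ler_sum => k _.
  have xS : x k.+1 - x k = t / m by rewrite /x -mulrBl -mulrBr -natrB // subSnn mulr1.
  rewrite -xS; apply: hD.
  - by apply: divr_ge0; [exact: mulr_ge0 | exact: ltW].
  - by rewrite -subr_ge0 xS divr_ge0 // ltW.
  rewrite /x ler_pdivrMr // mul1r -[m]mul1r.
  by apply: ler_pM => //; rewrite ler_nat.
rewrite sumr_const card_ord -mulr_natr -/m.
have -> : K * (t / m) ^+ 2 * m = K / m * t ^+ 2 by field; rewrite gt_eqF.
rewrite -[leRHS]mulr1 ler_wpM2l ?divr_ge0 ?(ltW m0) //.
exact: exprn_ile1.
Qed.

Lemma const_of_sq_increments (D : R -> R) (K : R) : 0 <= K ->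
  (forall s t, 0 <= s -> s <= t -> t <= 1 -> `|D t - D s| <= K * (t - s) ^+ 2) ->
  forall t, 0 <= t -> t <= 1 -> D t = D 0.
Proof.
move=> K0 hD t t0 t1; apply/eqP; rewrite -subr_eq0 -normr_le0.
by apply: (@le0_of_le_div_succ _ K) => n; exact: norm_sub_le_div_succ.
Qed.

Lemma is_derive1_continuous (p dp : R -> R) :
  (forall x, is_derive x (1:R) p (dp x)) -> continuous p.
Proof.
move=> hp x; apply/differentiable_continuous; rewrite -derivable1_diffP.
exact: (@ex_derive _ _ _ x 1 p (dp x) (hp x)).
Qed.

Lemma MVT_convex (p dp : R -> R) (x y : R) : (forall z, is_derive z (1:R) p (dp z)) ->
  exists2 l, 0 <= l <= 1 & p x - p y = dp (y + l * (x - y)) * (x - y).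
Proof.
move=> hp; wlog xy : x y / x <= y.
  move=> H; have [/H //|/ltW yx] := leP x y.
  have [l /andP[l0 l1] e] := H y x yx; exists (1 - l).
    by rewrite subr_ge0 l1 lerBlDr lerDl l0.
  have -> : y + (1 - l) * (x - y) = x + l * (y - x) by ring.
  by rewrite -opprB e -mulrN opprB.
have [c] := MVT_segment xy (fun z _ => hp z) (continuous_subspaceT (is_derive1_continuous hp)).
rewrite in_itv /= => /andP[xc cy] e.
have [->|xny] := eqVneq x y; first by exists 0; rewrite ?lexx ?ler01 // !subrr !mulr0.
have yx0 : 0 < y - x by rewrite subr_gt0 lt_neqAle xny.
exists ((y - c) / (y - x)).
  by rewrite divr_ge0 ?subr_ge0 ?(ltW yx0) //= ler_pdivrMr // mul1r lerB.
have -> : y + (y - c) / (y - x) * (x - y) = c by field; rewrite gt_eqF.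
by rewrite -opprB e -mulrN opprB.
Qed.

Lemma norm_convex_le (x y l B : R) : 0 <= l <= 1 -> `|x| <= B -> `|y| <= B ->
  `|y + l * (x - y)| <= B.
Proof.
move=> /andP[l0 l1] xB yB.
have -> : y + l * (x - y) = (1 - l) * y + l * x by ring.
apply: le_trans (ler_normD _ _) _; rewrite !normrM (ger0_norm l0) ger0_norm ?subr_ge0 //.
have -> : B = (1 - l) * B + l * B by ring.
by apply: lerD; apply: ler_wpM2l; rewrite ?subr_ge0.
Qed.

Lemma lipschitz_of_deriv_bounded (p dp : R -> R) B L :
  (forall z, is_derive z (1:R) p (dp z)) -> (forall z, `|z| <= B -> `|dp z| <= L) ->
  forall x y, `|x| <= B -> `|y| <= B -> `|p x - p y| <= L * `|x - y|.
Proof.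
move=> hp hL x y xB yB; have [l l01 ->] := MVT_convex x y hp.
by rewrite normrM ler_wpM2r // hL // norm_convex_le.
Qed.

Lemma taylor1_bound (p dp ddp : R -> R) B L :
  (forall z, is_derive z (1:R) p (dp z)) -> (forall z, is_derive z (1:R) dp (ddp z)) ->
  (forall z, `|z| <= B -> `|ddp z| <= L) ->
  forall x y, `|x| <= B -> `|y| <= B -> `|p x - p y - dp y * (x - y)| <= L * (x - y) ^+ 2.
Proof.
move=> hp hdp hL x y xB yB; have [l l01 ->] := MVT_convex x y hp.
have L0 : 0 <= L := le_trans (normr_ge0 _) (hL _ yB).
rewrite -mulrBl normrM.
apply: le_trans (ler_wpM2r (normr_ge0 _)
  (lipschitz_of_deriv_bounded hdp hL (norm_convex_le l01 xB yB) yB)) _.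
rewrite addrAC subrr add0r normrM -mulrA -real_normK ?num_real // expr2.
rewrite ler_wpM2l // ler_wpM2r // ger0_norm; last by case/andP: l01.
by rewrite -[leRHS]mul1r ler_wpM2r //; case/andP: l01.
Qed.

End Calculus.

Section Primitive.
Variable R : realType.
Local Notation mu := (@lebesgue_measure R).
Local Notation I01 := (`[(0:R), (1:R)]%classic : set R).

Definition bmeas (f : R -> R) := measurable_fun I01 f /\
  exists M, forall t, 0 <= t -> t <= 1 -> `|f t| <= M.

Lemma lebesgue_measure01 : mu I01 = 1%E.
Proof. by rewrite lebesgue_measure_itv /= lte01 oppr0 adde0. Qed.

Lemma lebesgue_measure_oc (s t : R) : s <= t -> fine (mu `]s, t]) = t - s.
Proof.
rewrite lebesgue_measure_itv /= lte_fin le_eqVlt => /predU1P[->|->] //.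
by rewrite ltxx subrr.
Qed.

Lemma subitv_oc01 (s t : R) : 0 <= s -> t <= 1 -> `]s, t] `<=` I01.
Proof.
move=> s0 t1 x /=; rewrite !in_itv /= => /andP[sx xt].
by rewrite (le_trans s0 (ltW sx)) (le_trans xt t1).
Qed.

Lemma subitv_cc01 (s t : R) : 0 <= s -> t <= 1 -> `[s, t] `<=` I01.
Proof.
move=> s0 t1 x /=; rewrite !in_itv /= => /andP[sx xt].
by rewrite (le_trans s0 sx) (le_trans xt t1).
Qed.

Lemma bmeas_integrable f A : bmeas f -> measurable A -> A `<=` I01 ->
  mu.-integrable A (EFin \o f).
Proof.
case=> mf [M hM] mA sA; apply: measurable_bounded_integrable => //.
- rewrite (le_lt_trans _ (_ : mu I01 < +oo)%E) ?lebesgue_measure01 ?ltry //.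
  by rewrite -lebesgue_measure01; apply: le_measure => //; rewrite inE.
- exact: measurable_funS mf.
- exists M; split; first exact: num_real.
  move=> x Mx y /sA; rewrite /= in_itv /= => /andP[y0 y1].
  exact: le_trans (hM _ y0 y1) (ltW Mx).
Qed.

Lemma bmeas_integrable_oc f s t : bmeas f -> 0 <= s -> t <= 1 ->
  mu.-integrable `]s, t] (EFin \o f).
Proof. by move=> bf s0 t1; apply: bmeas_integrable; last exact: subitv_oc01. Qed.

Lemma bmeas_integrable_cc f s t : bmeas f -> 0 <= s -> t <= 1 ->
  mu.-integrable `[s, t] (EFin \o f).
Proof. by move=> bf s0 t1; apply: bmeas_integrable; last exact: subitv_cc01. Qed.

Lemma bmeas_cst c : bmeas (fun _ => c).
Proof. by split; [exact: measurable_cst | exists `|c|]. Qed.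

Lemma bmeasD f g : bmeas f -> bmeas g -> bmeas (fun x => f x + g x).
Proof.
move=> [mf [M1 h1]] [mg [M2 h2]]; split; first exact: measurable_funD.
exists (M1 + M2) => t t0 t1; apply: le_trans (ler_normD _ _) _.
by apply: lerD; [exact: h1 | exact: h2].
Qed.

Lemma bmeasM f g : bmeas f -> bmeas g -> bmeas (fun x => f x * g x).
Proof.
move=> [mf [M1 h1]] [mg [M2 h2]]; split; first exact: measurable_funM.
exists (M1 * M2) => t t0 t1; rewrite normrM.
by apply: ler_pM => //; [exact: h1 | exact: h2].
Qed.

Lemma bmeasN f : bmeas f -> bmeas (fun x => - f x).
Proof.
move=> bf; have := bmeasM (bmeas_cst (-1)) bf.
by congr bmeas; apply/funext => x; rewrite mulN1r.
Qed.

Lemma bmeas_sum (I : Type) (l : seq I) (f : I -> R -> R) :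
  (forall i, bmeas (f i)) -> bmeas (fun x => \sum_(i <- l) f i x).
Proof.
move=> hf; elim: l => [|i l IH].
  by have := bmeas_cst 0; congr bmeas; apply/funext => x; rewrite big_nil.
by have := bmeasD (hf i) IH; congr bmeas; apply/funext => x; rewrite big_cons.
Qed.

Lemma bmeas_cont F : {within I01, continuous F} -> bmeas F.
Proof.
move=> cF; split.
  by apply: subspace_continuous_measurable_fun => //; exact: measurable_itv.
have [cM _ hM] := EVT_max (@ler01 R) cF.
have [cm _ hm] := EVT_min (@ler01 R) cF.
exists (`|F cM| + `|F cm|) => t t0 t1.
have tI : t \in `[(0:R), 1] by rewrite in_itv /= t0 t1.
rewrite ler_norml; apply/andP; split.
  rewrite lerNl; apply: (@le_trans _ _ (- F cm)); first by rewrite lerN2 hm.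
  by apply: le_trans (ler_norm _) _; rewrite normrN ler_wpDl.
by apply: le_trans (hM t tI) (le_trans (ler_norm _) _); rewrite ler_wpDr.
Qed.

Lemma bmeas_comp (p : R -> R) F : continuous p -> {within I01, continuous F} ->
  bmeas (fun x => p (F x)).
Proof.
move=> cp cF; apply: bmeas_cont => x; apply: continuous_comp; [exact: cF | exact: cp].
Qed.

Lemma norm_Rintegral_oc_le f s t K : bmeas f -> 0 <= s -> s <= t -> t <= 1 ->
  (forall r, s < r -> r <= t -> `|f r| <= K) ->
  `|Rintegral mu `]s, t] f| <= K * (t - s).
Proof.
move=> bf s0 st t1 hK; have intf := bmeas_integrable_oc bf s0 t1.
apply: le_trans (le_normr_Rintegral _ intf) _ => //.
rewrite -(lebesgue_measure_oc st) -Rintegral_cst //.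
apply: le_Rintegral => //; first exact: integrable_norm intf.
  exact: bmeas_integrable_oc (bmeas_cst K) s0 t1.
by move=> r /=; rewrite in_itv /= => /andP[]; exact: hK.
Qed.

Definition primitive (F f : R -> R) := bmeas f /\ {within I01, continuous F} /\
  forall t, 0 <= t -> t <= 1 -> F t = F 0 + Rintegral mu `[0, t] f.

Lemma primitive_bmeas F f : primitive F f -> bmeas F.
Proof. by case=> _ [cF _]; exact: bmeas_cont. Qed.

Lemma Rintegral_cc0B f s t : bmeas f -> 0 <= s -> s <= t -> t <= 1 ->
  Rintegral mu `[0, t] f - Rintegral mu `[0, s] f = Rintegral mu `]s, t] f.
Proof.
move=> bf s0 st t1; apply: Rintegral_itvB; rewrite ?bnd_simp //.
exact: bmeas_integrable_cc.
Qed.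

Lemma primitive_increment F f s t : primitive F f -> 0 <= s -> s <= t -> t <= 1 ->
  F t - F s = Rintegral mu `]s, t] f.
Proof.
move=> [bf [_ hF]] s0 st t1.
rewrite (hF t) ?(le_trans s0 st) // (hF s) ?(le_trans st t1) //.
by rewrite opprD addrACA subrr add0r Rintegral_cc0B.
Qed.

Lemma primitive_lipschitz F f : primitive F f -> exists2 M, 0 <= M &
  (forall r, 0 <= r -> r <= 1 -> `|f r| <= M) /\
  (forall s t, 0 <= s -> s <= t -> t <= 1 -> `|F t - F s| <= M * (t - s)).
Proof.
move=> pF; have [bf _] := pF; have [_ [M hM]] := bf.
exists M; first exact: le_trans (normr_ge0 _) (hM 0 (lexx _) ler01).
split=> // s t s0 st t1; rewrite (primitive_increment pF) //.
apply: norm_Rintegral_oc_le => // r sr rt.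
by apply: hM; [exact: le_trans s0 (ltW sr) | exact: le_trans rt t1].
Qed.

(* The defect [F - \int_0 f] has increments O((t - s)^2), hence is constant. *)
Lemma primitive_of_local_error F f K : 0 <= K -> bmeas f ->
  {within I01, continuous F} ->
  (forall s t, 0 <= s -> s <= t -> t <= 1 ->
     `|F t - F s - Rintegral mu `]s, t] f| <= K * (t - s) ^+ 2) ->
  primitive F f.
Proof.
move=> K0 bf cF hK; split=> //; split=> // t t0 t1.
pose D x := F x - Rintegral mu `[0, x] f.
have D0 : D 0 = F 0 by rewrite /D set_itv1 Rintegral_set1 subr0.
rewrite -D0 -(const_of_sq_increments K0 _ t0 t1) ?/D ?subrK // => s x s0 sx x1.
have -> : D x - D s = F x - F s - Rintegral mu `]s, x] f.
  by rewrite -(Rintegral_cc0B bf s0 sx x1) /D; ring.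
exact: hK.
Qed.

Lemma primitive_Rintegral f : bmeas f -> primitive (fun t => Rintegral mu `[0, t] f) f.
Proof.
move=> bf; split=> //; split.
  exact: (parameterized_integral_continuous ler01 (bmeas_integrable_cc bf (lexx 0) (lexx 1))).
by move=> t _ _; rewrite set_itv1 Rintegral_set1 add0r.
Qed.

Lemma primitive_cst c : primitive (fun _ => c) (fun _ => 0).
Proof.
split; first exact: bmeas_cst.
split; first by move=> x; exact: cvg_cst.
by move=> t t0 t1; rewrite Rintegral_cst ?mul0r ?addr0.
Qed.

Lemma primitiveD F f G g : primitive F f -> primitive G g ->
  primitive (fun x => F x + G x) (fun x => f x + g x).
Proof.
move=> [bf [cF hF]] [bg [cG hG]]; split; first exact: bmeasD.
split; first by move=> x; apply: cvgD; [exact: cF | exact: cG].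
move=> t t0 t1; rewrite hF // hG // RintegralD //; last 2 first.
- exact: bmeas_integrable_cc.
- exact: bmeas_integrable_cc.
by rewrite hF ?lexx ?ler01 // hG ?lexx ?ler01 // set_itv1 !Rintegral_set1 !addr0 addrACA.
Qed.

Lemma primitiveZ c F f : primitive F f -> primitive (fun x => c * F x) (fun x => c * f x).
Proof.
move=> [bf [cF hF]]; split; first exact: bmeasM (bmeas_cst _) bf.
split; first by move=> x; apply: cvgM; [exact: cvg_cst | exact: cF].
move=> t t0 t1; rewrite hF // RintegralZl //; last exact: bmeas_integrable_cc.
by rewrite hF ?lexx ?ler01 // set_itv1 !Rintegral_set1 !addr0 mulrDr.
Qed.

Lemma primitive_sum (I : Type) (l : seq I) (F f : I -> R -> R) :
  (forall i, primitive (F i) (f i)) ->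
  primitive (fun x => \sum_(i <- l) F i x) (fun x => \sum_(i <- l) f i x).
Proof.
move=> hF; elim: l => [|i l IH].
  by have := primitive_cst 0; congr primitive; apply/funext => x; rewrite big_nil.
by have := primitiveD (hF i) IH; congr primitive; apply/funext => x; rewrite big_cons.
Qed.

Lemma primitiveM F f G g : primitive F f -> primitive G g ->
  primitive (fun x => F x * G x) (fun x => f x * G x + F x * g x).
Proof.
move=> pF pG.
have [Mf Mf0 [hf LF]] := primitive_lipschitz pF.
have [Mg Mg0 [hg LG]] := primitive_lipschitz pG.
have [bf [cF _]] := pF; have [bg [cG _]] := pG.
have bF := primitive_bmeas pF; have bG := primitive_bmeas pG.
apply: (@primitive_of_local_error _ _ (Mf * Mg + Mf * Mg)).
- by rewrite addr_ge0 ?mulr_ge0.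
- exact: bmeasD (bmeasM bf bG) (bmeasM bF bg).
- by move=> x; apply: cvgM; [exact: cF | exact: cG].
move=> s t s0 st t1.
have int h : bmeas h -> mu.-integrable `]s, t] (EFin \o h).
  by move=> bh; exact: bmeas_integrable_oc.
have bfGt : bmeas (fun r => f r * G t) by exact: bmeasM bf (bmeas_cst _).
have bFsg : bmeas (fun r => F s * g r) by exact: bmeasM (bmeas_cst _) bg.
have bfGFg := bmeasD (bmeasM bf bG) (bmeasM bF bg).
have -> : F t * G t - F s * G s - Rintegral mu `]s, t] (fun x => f x * G x + F x * g x) =
    Rintegral mu `]s, t] (fun r => (f r * G t + F s * g r) - (f r * G r + F r * g r)).
  rewrite (RintegralB _ (int _ (bmeasD bfGt bFsg)) (int _ bfGFg)) //.
  rewrite (RintegralD _ (int _ bfGt) (int _ bFsg)) //.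
  rewrite RintegralZr ?int // RintegralZl ?int //.
  by rewrite -(primitive_increment pF) // -(primitive_increment pG) //; ring.
rewrite expr2 mulrA; apply: norm_Rintegral_oc_le => //.
  exact: bmeasD (bmeasD bfGt bFsg) (bmeasN bfGFg).
move=> r sr rt.
have r0 := le_trans s0 (ltW sr); have r1 := le_trans rt t1.
have -> : f r * G t + F s * g r - (f r * G r + F r * g r) =
    f r * (G t - G r) - (F r - F s) * g r by ring.
rewrite [leRHS]mulrDl; apply: le_trans (ler_normB _ _) _; rewrite !normrM; apply: lerD.
  rewrite -mulrA; apply: ler_pM => //; first exact: hf.
  by apply: le_trans (LG _ _ r0 rt t1) _; rewrite ler_wpM2l // lerB // ltW.
rewrite (mulrC Mf) -mulrA mulrC; apply: ler_pM => //; first exact: hg.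
by apply: le_trans (LF _ _ s0 (ltW sr) r1) _; rewrite ler_wpM2l // lerB.
Qed.

Lemma primitive_comp F f (p dp ddp : R -> R) : primitive F f ->
  (forall x, is_derive x (1:R) p (dp x)) -> (forall x, is_derive x (1:R) dp (ddp x)) ->
  (forall B, exists L, forall x, `|x| <= B -> `|ddp x| <= L) ->
  primitive (fun x => p (F x)) (fun x => dp (F x) * f x).
Proof.
move=> pF hp hdp hddp.
have [B hB] := (primitive_bmeas pF).2; have [L hL] := hddp B.
have [M M0 [hf LF]] := primitive_lipschitz pF.
have [bf [cF _]] := pF.
have bdpF := bmeas_comp (is_derive1_continuous hdp) cF.
have L0 : 0 <= L := le_trans (normr_ge0 _) (hL _ (hB 0 (lexx _) ler01)).
apply: (@primitive_of_local_error _ _ (L * M ^+ 2 + L * M * M)).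
- by rewrite addr_ge0 ?mulr_ge0 ?exprn_ge0.
- exact: bmeasM.
- by move=> x; apply: continuous_comp; [exact: cF | exact: is_derive1_continuous].
move=> s t s0 st t1.
have s1 := le_trans st t1; have t0 := le_trans s0 st.
have bdf : bmeas (fun r => dp (F s) * f r - dp (F r) * f r).
  by apply: bmeasD; [exact: bmeasM (bmeas_cst _) bf | exact: bmeasN (bmeasM bdpF bf)].
have -> : p (F t) - p (F s) - Rintegral mu `]s, t] (fun r => dp (F r) * f r) =
    (p (F t) - p (F s) - dp (F s) * (F t - F s)) +
    Rintegral mu `]s, t] (fun r => dp (F s) * f r - dp (F r) * f r).
  have int h : bmeas h -> mu.-integrable `]s, t] (EFin \o h).
    by move=> bh; exact: bmeas_integrable_oc.
  rewrite (RintegralB _ (int _ (bmeasM (bmeas_cst _) bf)) (int _ (bmeasM bdpF bf))) //.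
  rewrite RintegralZl ?int //.
  by rewrite -(primitive_increment pF) //; ring.
rewrite mulrDl; apply: le_trans (ler_normD _ _) _; apply: lerD.
  apply: le_trans (taylor1_bound hp hdp hL (hB _ t0 t1) (hB _ s0 s1)) _.
  rewrite -mulrA ler_wpM2l // -exprMn -[X in X <= _]real_normK ?num_real //.
  by rewrite lerXn2r ?nnegrE ?mulr_ge0 ?subr_ge0 // LF.
rewrite expr2 !mulrA; apply: norm_Rintegral_oc_le => // r sr rt.
have r0 := le_trans s0 (ltW sr); have r1 := le_trans rt t1.
rewrite -mulrBl normrM [L * M * M * _]mulrAC ler_pM ?hf //.
apply: le_trans (lipschitz_of_deriv_bounded hdp hL (hB _ s0 s1) (hB _ r0 r1)) _.
rewrite -mulrA ler_wpM2l // distrC; apply: le_trans (LF _ _ s0 (ltW sr) r1) _.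
by rewrite ler_wpM2l // lerB.
Qed.

End Primitive.

Section Rotation.
Variable R : realType.

Ltac ord_cases i := case: i => [[|[|[|[|?]]]] ?] //=.

Lemma delta_mx_inord n (a b : nat) : (a < n.+1)%N -> (b < n.+1)%N ->
  delta_mx (inord a) (inord b) =
    \matrix_(i < n.+1, j < n.+1) ((i == a :> nat) && (j == b :> nat))%:R :> 'M[R]_n.+1.
Proof. by move=> ha hb; apply/matrixP => i j; rewrite !mxE -!val_eqE /= !inordK. Qed.

Lemma E1E : E1 R = \matrix_(i, j)
  (((i == 2%N :> nat) && (j == 1%N :> nat))%:R - ((i == 1%N :> nat) && (j == 2%N :> nat))%:R).
Proof. by apply/matrixP => i j; rewrite /E1 !delta_mx_inord // !mxE. Qed.

Lemma E2E : E2 R = \matrix_(i, j)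
  (((i == 0%N :> nat) && (j == 2%N :> nat))%:R - ((i == 2%N :> nat) && (j == 0%N :> nat))%:R).
Proof. by apply/matrixP => i j; rewrite /E2 !delta_mx_inord // !mxE. Qed.

Lemma E3E : E3 R = \matrix_(i, j)
  (((i == 1%N :> nat) && (j == 0%N :> nat))%:R - ((i == 0%N :> nat) && (j == 1%N :> nat))%:R).
Proof. by apply/matrixP => i j; rewrite /E3 !delta_mx_inord // !mxE. Qed.

Lemma E4E : E4 R = \matrix_(i, j) ((i == 3%N :> nat) && (j == 3%N :> nat))%:R.
Proof. by rewrite /E4 delta_mx_inord. Qed.

(* rot3 th is the rotation R(th) of the (x1, x2)-plane and rot4 th = exp (th E3). *)
Definition rot_entry (th : R) (i j : nat) : R :=
  if (i == 0%N) && (j == 0%N) then cos th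
  else if (i == 0%N) && (j == 1%N) then - sin th
  else if (i == 1%N) && (j == 0%N) then sin th
  else if (i == 1%N) && (j == 1%N) then cos th
  else (i == j)%:R.

Definition rot3 th : 'M[R]_3 := \matrix_(i, j) rot_entry th i j.
Definition rot4 th : 'M[R]_4 := \matrix_(i, j) rot_entry th i j.

Lemma rot3K th : rot3 th *m rot3 (- th) = 1%:M.
Proof.
apply/matrixP => i j; rewrite !mxE !big_ord_recl !big_ord0 !mxE /rot_entry /= cosN sinN.
by ord_cases i; ord_cases j; first [ring | rewrite -(cos2Dsin2 th); ring].
Qed.

Lemma rot4K th : rot4 th *m rot4 (- th) = 1%:M.
Proof.
apply/matrixP => i j; rewrite !mxE !big_ord_recl !big_ord0 !mxE /rot_entry /= cosN sinN.
by ord_cases i; ord_cases j; first [ring | rewrite -(cos2Dsin2 th); ring].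
Qed.

Lemma rot4_0 : rot4 0 = 1%:M.
Proof.
apply/matrixP => i j; rewrite !mxE /rot_entry cos0 sin0 oppr0.
by ord_cases i; ord_cases j.
Qed.

Lemma E3_rot4C th : E3 R *m rot4 th = rot4 th *m E3 R.
Proof.
rewrite E3E; apply/matrixP => i j; rewrite !mxE !big_ord_recl !big_ord0 !mxE /rot_entry /=.
by ord_cases i; ord_cases j; ring.
Qed.

Lemma E4_rot4C th : E4 R *m rot4 th = rot4 th *m E4 R.
Proof.
rewrite E4E; apply/matrixP => i j; rewrite !mxE !big_ord_recl !big_ord0 !mxE /rot_entry /=.
by ord_cases i; ord_cases j; ring.
Qed.

Lemma rot4_conj_E1E2 th p w : rot4 (- th) *m (p *: E1 R + w *: E2 R) *m rot4 th =
  (p * cos th + w * sin th) *: E1 R + (w * cos th - p * sin th) *: E2 R.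
Proof.
rewrite E1E E2E; apply/matrixP => i j.
rewrite !mxE !big_ord_recl !big_ord0 !mxE !big_ord_recl !big_ord0 !mxE /rot_entry /= cosN sinN.
by ord_cases i; ord_cases j; ring.
Qed.

Lemma ord3_inord : [/\ ord0 = inord 0 :> 'I_3, lift ord0 ord0 = inord 1 :> 'I_3
  & lift ord0 (lift ord0 ord0) = inord 2 :> 'I_3].
Proof. by split; apply: val_inj; rewrite /= inordK. Qed.

Lemma Ctilde_rot3 (C : 'M[R]_3) v : Ctilde C v = C *m rot3 v.
Proof.
have [e0 e1 e2] := ord3_inord.
apply/matrixP => i j; rewrite !mxE !big_ord_recl !big_ord0 !mxE /rot_entry /= e2 e1 e0.
by ord_cases j; ring.
Qed.

Lemma grp_elt_rot4 (C : 'M[R]_3) v th : grp_elt C v *m rot4 th = grp_elt (C *m rot3 th) v.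
Proof.
have [e0 e1 e2] := ord3_inord.
apply/matrixP => i j; rewrite !mxE !big_ord_recl !big_ord0 !mxE /rot_entry /=.
ord_cases i; ord_cases j; rewrite ?mxE ?big_ord_recl ?big_ord0 ?mxE /rot_entry /= ?e2 ?e1 ?e0 ?inordK //=; ring.
Qed.

Definition rot_entry' (th : R) (i j : nat) : R :=
  if (i == 0%N) && (j == 0%N) then - sin th
  else if (i == 0%N) && (j == 1%N) then - cos th
  else if (i == 1%N) && (j == 0%N) then cos th
  else if (i == 1%N) && (j == 1%N) then - sin th
  else 0.

Lemma E3_rot4E th : E3 R *m rot4 th = \matrix_(i, j) rot_entry' th i j.
Proof.
rewrite E3E; apply/matrixP => i j.
rewrite !mxE !big_ord_recl !big_ord0 !mxE /rot_entry /rot_entry' /=.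
by ord_cases i; ord_cases j; ring.
Qed.

Lemma primitive_rot4 F f (k j : 'I_4) : primitive F f ->
  primitive (fun t => rot4 (F t) k j) (fun t => f t * (E3 R *m rot4 (F t)) k j).
Proof.
move=> pF.
have pc : primitive (fun t => cos (F t)) (fun t => - sin (F t) * f t).
  apply: (@primitive_comp _ F f cos (fun x => - sin x) (fun x => - cos x)) => // B.
  by exists 1 => x _; rewrite normrN cos_max.
have ps : primitive (fun t => sin (F t)) (fun t => cos (F t) * f t).
  apply: (@primitive_comp _ F f sin cos (fun x => - sin x)) => // B.
  by exists 1 => x _; rewrite normrN sin_max.
have pms := primitiveZ (-1) ps.
have p1 := @primitive_cst R 1; have p0 := @primitive_cst R 0.
under eq_fun do rewrite mxE.
under [X in primitive _ X]eq_fun do rewrite E3_rot4E mxE.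
rewrite /rot_entry /rot_entry'.
by ord_cases k; ord_cases j;
  [ move: pc | move: pms | move: p0 | move: p0
  | move: ps | move: pc  | move: p0 | move: p0
  | move: p0 | move: p0  | move: p1 | move: p0
  | move: p0 | move: p0  | move: p0 | move: p1 ];
  congr primitive; apply/funext => ?; ring.
Qed.

End Rotation.

Section Transfer.
Variable R : realType.
Local Notation mu := (@lebesgue_measure R).

Lemma admissibleP (X : 'I_3 -> 'M[R]_4) u g target :
  admissible X u g target <->
  [/\ forall k, bmeas (u k), g 0 = 1%:M, g 1 = target &
      forall i j, primitive (fun t => g t i j) (fun t => (g t *m ctrl_mx X u t) i j)].
Proof.
split.
  case=> mu_ [[M hM] [cg [g0 [g1 hg]]]].
  have bu k : bmeas (u k).
    by split=> //; exists M => t t0 t1; apply: hM; rewrite in_itv /= t0 t1.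
  split=> // i j; split.
    under eq_fun do rewrite mxE.
    apply: bmeas_sum => k; apply: bmeasM; first exact: bmeas_cont.
    under eq_fun do rewrite /ctrl_mx summxE.
    by apply: bmeas_sum => l; under eq_fun do rewrite mxE; exact: bmeasM (bu l) (bmeas_cst _).
  by split=> // t t0 t1; rewrite g0 hg // in_itv /= t0 t1.
case=> bu g0 g1 pg.
have /choice[M hM] : forall k, exists M, forall t, 0 <= t -> t <= 1 -> `|u k t| <= M.
  by move=> k; case: (bu k).
split; first by move=> k; case: (bu k).
split.
  exists (\sum_k `|M k|) => k t; rewrite in_itv /= => /andP[t0 t1].
  apply: le_trans (le_trans (hM k t t0 t1) (ler_norm _)) _.
  by rewrite (bigD1 k) //= lerDl sumr_ge0.
split; first by move=> i j; case: (pg i j) => _ [].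
do 2 split=> //; move=> t; rewrite in_itv /= => /andP[t0 t1] i j.
by case: (pg i j) => _ [_ ->] //; rewrite g0.
Qed.

Definition frameA (a : R) : 'I_3 -> 'M[R]_4 := fun k =>
  if (k == 0%N :> nat) then E1 R else if (k == 1%N :> nat) then E4 R + a *: E3 R else E2 R.

Lemma frame1A : frame1 R = frameA (-1).
Proof. by apply/funext => k; rewrite /frame1 /frameA scaleN1r. Qed.

Lemma frame2A : frame2 R = frameA 0.
Proof. by apply/funext => k; rewrite /frame2 /frameA scale0r addr0. Qed.

Local Notation k0 := (inord 0 : 'I_3).
Local Notation k1 := (inord 1 : 'I_3).
Local Notation k2 := (inord 2 : 'I_3).

Lemma ctrl_mx_frameA a u r : ctrl_mx (frameA a) u r =
  u k0 r *: E1 R + u k2 r *: E2 R + u k1 r *: E4 R + (a * u k1 r) *: E3 R.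
Proof.
have [e0 e1 e2] := ord3_inord.
rewrite /ctrl_mx !big_ord_recl big_ord0 /frameA /= -e0 -e1 -e2.
by apply/matrixP => i j; rewrite !mxE; ring.
Qed.

Definition rot_ctrl (u : 'I_3 -> R -> R) (th : R -> R) : 'I_3 -> R -> R := fun k r =>
  if (k == 0%N :> nat) then u k0 r * cos (th r) + u k2 r * sin (th r)
  else if (k == 1%N :> nat) then u k1 r
  else u k2 r * cos (th r) - u k0 r * sin (th r).

Lemma rot_ctrlE u th r :
  [/\ rot_ctrl u th k0 r = u k0 r * cos (th r) + u k2 r * sin (th r),
      rot_ctrl u th k1 r = u k1 r
    & rot_ctrl u th k2 r = u k2 r * cos (th r) - u k0 r * sin (th r)].
Proof. by rewrite /rot_ctrl !inordK. Qed.

Lemma sum_sq_rot_ctrl u th r :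
  \sum_(k < 3) rot_ctrl u th k r ^+ 2 = \sum_(k < 3) u k r ^+ 2.
Proof.
have [e0 e1 e2] := ord3_inord; have [w0 w1 w2] := rot_ctrlE u th r.
rewrite !big_ord_recl !big_ord0 e2 e1 e0 w0 w1 w2.
have := cos2Dsin2 (th r); set c := cos (th r); set s := sin (th r) => cs.
by rewrite -[u k0 r ^+ 2]mulr1 -[u k2 r ^+ 2]mulr1 -!cs; ring.
Qed.

(* h = g N(th) with th' = b u_2 has h' = g (A N + th' E3 N) = h A', where A and A'
   are the control matrices of frameA a and frameA (a + b). *)
Lemma rot4_ctrl_frameA a b u th r :
  ctrl_mx (frameA a) u r *m rot4 (th r) + (b * u k1 r) *: (E3 R *m rot4 (th r)) =
  rot4 (th r) *m ctrl_mx (frameA (a + b)) (rot_ctrl u th) r.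
Proof.
have [w0 w1 w2] := rot_ctrlE u th r.
have conj := rot4_conj_E1E2 (th r) (u k0 r) (u k2 r).
have e3 := E3_rot4C (th r); have e4 := E4_rot4C (th r); have rK := rot4K (th r).
rewrite !ctrl_mx_frameA w0 w1 w2 2!mulmxDr -conj !mulmxA rK mul1mx.
rewrite 3!mulmxDl -!scalemxAl -!scalemxAr -e3 -e4.
by rewrite -addrA -scalerDl mulrDl.
Qed.

Lemma mulmx_ctrl_frameA33 a u r (G : 'M[R]_4) :
  (G *m ctrl_mx (frameA a) u r) o3 o3 = G o3 o3 * u k1 r.
Proof.
have l3 : lift ord0 (lift ord0 (lift ord0 ord0)) = o3 :> 'I_4 by apply: val_inj; rewrite /= inordK.
by rewrite ctrl_mx_frameA E1E E2E E3E E4E mxE !big_ord_recl big_ord0 !mxE l3 /o3 !inordK //=;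
  ring.
Qed.

Lemma admissible_frameA_Rintegral a u g C v :
  admissible (frameA a) u g (grp_elt C v) -> Rintegral mu `[0, 1] (u k1) = v.
Proof.
case/admissibleP=> bu g0 g1 pg.
pose phi t := Rintegral mu `[0, t] (u k1).
have pphi : primitive phi (u k1) := primitive_Rintegral (bu k1).
have pE : primitive (fun t => expR (-1 * phi t)) (fun t => expR (-1 * phi t) * (-1 * u k1 t)).
  apply: (@primitive_comp _ _ _ expR expR expR) (primitiveZ (-1) pphi) _ _ _ => // B.
  exists (expR B) => x xB; rewrite ger0_norm ?expR_ge0 // ler_expR.
  exact: le_trans (ler_norm x) xB.
(* g_44 exp (- phi) has derivative 0 *)
have [_ [_ p33]] := primitiveM (pg o3 o3) pE.
have := p33 1 ler01 (lexx 1).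
rewrite (@eq_Rintegral _ _ _ mu _ (fun=> 0) (fun t => _ + _)); last first.
  by move=> r _; rewrite mulmx_ctrl_frameA33; ring.
rewrite Rintegral_cst // mul0r addr0 g0 g1 /phi set_itv1 Rintegral_set1 mulr0 expR0.
rewrite !mxE /o3 inordK //= eqxx mulr1 mulr1n -expRD => /(congr1 (@ln R)).
by rewrite expRK ln1 mulN1r => /eqP; rewrite subr_eq0 eq_sym => /eqP.
Qed.

Lemma ctrl_length_rot_ctrl u th : ctrl_length (rot_ctrl u th) = ctrl_length u.
Proof. by congr Rintegral; apply/funext => r; rewrite sum_sq_rot_ctrl. Qed.

Lemma bmeas_rot_ctrl u th k : (forall l, bmeas (u l)) ->
  {within `[(0:R), (1:R)], continuous th} -> bmeas (rot_ctrl u th k).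
Proof.
move=> bu cth.
have bc := bmeas_comp (@continuous_cos R) cth; have bs := bmeas_comp (@continuous_sin R) cth.
rewrite /rot_ctrl; case: (k == 0%N :> nat); first by apply: bmeasD; exact: bmeasM.
case: (k == 1%N :> nat) => //.
by apply: bmeasD; [exact: bmeasM | exact: bmeasN (bmeasM _ _)].
Qed.

Lemma admissible_frameA_rot a b u g C v :
  let th t := b * Rintegral mu `[0, t] (u k1) in
  admissible (frameA a) u g (grp_elt C v) ->
  admissible (frameA (a + b)) (rot_ctrl u th) (fun t => g t *m rot4 (th t))
    (grp_elt (C *m rot3 (b * v)) v).
Proof.
move=> th adm; have th1 : th 1 = b * v by rewrite /th (admissible_frameA_Rintegral adm).
case/admissibleP: adm => bu g0 g1 pg.
have pth : primitive th (fun t => b * u k1 t) := primitiveZ b (primitive_Rintegral (bu k1)).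
apply/admissibleP; split=> [k||| i j].
- by apply: bmeas_rot_ctrl => //; case: pth => _ [].
- by rewrite g0 /th set_itv1 Rintegral_set1 mulr0 rot4_0 mulmx1.
- by rewrite g1 th1 grp_elt_rot4.
have := primitive_sum (index_enum 'I_4)
  (fun k => primitiveM (pg i k) (primitive_rot4 k j pth)).
congr primitive; apply/funext => t; first by rewrite mxE.
rewrite -mulmxA -rot4_ctrl_frameA mulmxDr mulmxA [RHS]mxE !mxE -big_split.
by apply: eq_bigr => k _; rewrite !mxE.
Qed.

Lemma sr_dist_frameA_rot a b C v :
  sr_dist (frameA a) (grp_elt C v) = sr_dist (frameA (a + b)) (grp_elt (C *m rot3 (b * v)) v).
Proof.
congr inf; apply/seteqP; split => _ [u [g [adm ->]]].
  by do 2 eexists; split; [exact: admissible_frameA_rot adm | rewrite ctrl_length_rot_ctrl].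
have := admissible_frameA_rot (- b) adm.
rewrite addrK -mulmxA mulNr rot3K mulmx1 => adm'.
by do 2 eexists; split; [exact: adm' | rewrite ctrl_length_rot_ctrl].
Qed.

End Transfer.

Theorem proposition14 (R : realType) (C : 'M[R]_3) (v : R) :
  SO3 C -> rho1 (grp_elt C v) = rho2 (grp_elt (Ctilde C v) v).
Proof.
move=> _; rewrite /rho1 /rho2 frame1A frame2A Ctilde_rot3.
by rewrite (sr_dist_frameA_rot (-1) 1) addNr mul1r.
Qed.
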